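(* A set $\mathbf D$ of tilings of $[n]$ is a Condorcet super-domain if and only if for every 4-element subset $F=\{i<j<k<l\}\subseteq[n]$, the restriction $\mathbf D|_F=\{T\cap\Lambda^3(F): T\in\mathbf D\}$ is a Condorcet super-domain for the color set $F$.
   Context: For a finite totally ordered set $C$ of colors, let $\Lambda^3(C)$ be the set of 3-element subsets of $C$, a triple $\{a<b<c\}$ being written $abc$. For a 4-element subset $\{a<b<c<d\}\subseteq C$, its stick is the sequence $(abc,\ abd,\ acd,\ bcd)$. A tiling for the color set $C$ (the inversion set of a rhombus tiling of the zonogon $Z(C;2)$) is a subset $T\subseteq\Lambda^3(C)$ such that for every 4-element subset $G\subseteq C$, $T\cap\mathrm{stick}(G)$ is an initial segment or a final segment of $\mathrm{stick}(G)$ (empty set and whole stick allowed). Here $n\ge 4$, $[n]=\{1,\dots,n\}$ with its usual order, and ''tiling'' without qualification means tiling for the color set $[n]$; note that $T\cap\Lambda^3(F)$ is a tiling for $F$ whenever $T$ is a tiling for $[n]$. For a finite set $V$ of odd cardinality and a family $(T_v)_{v\in V}$ of tilings for $C$, $sm((T_v)_{v\in V})$ is the set of triples lying in $T_v$ for more than $|V|/2$ indices $v$. A set $\mathbf D$ of tilings for $C$ is a Condorcet super-domain for $C$ if for every finite $V$ of odd cardinality and every family $(T_v)_{v\in V}$ with all $T_v\in\mathbf D$, $sm((T_v)_{v\in V})$ is a tiling for $C$. *)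

From mathcomp Require Import all_boot.
Set Implicit Arguments. Unset Strict Implicit. Unset Printing Implicit Defensive.

(* Colors: the color set [n] = {1,...,n} is represented by 'I_n = {0,...,n-1}
   with its usual (order-isomorphic) order. *)

Section Tilings.
Variable n : nat.

Definition triple := {set 'I_n}.

Definition Lambda3 (C : {set 'I_n}) : {set triple} :=
  [set t : triple | (t \subset C) && (#|t| == 3)].

Definition sorted_elems (G : {set 'I_n}) : seq 'I_n :=
  sort (fun x y : 'I_n => (x <= y)%N) (enum G).

(* stick of G = {a<b<c<d} : (abc, abd, acd, bcd) = (G\d, G\c, G\b, G\a) *)
Definition stick (G : {set 'I_n}) : seq triple :=
  [seq G :\ x | x <- rev (sorted_elems G)].

Definition initial_or_final (s : seq triple) (A : {set triple}) : Prop :=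
  exists k : nat,
    A = [set x in take k s] \/ A = [set x in drop k s].

Definition tiling (C : {set 'I_n}) (T : {set triple}) : Prop :=
  T \subset Lambda3 C /\
  forall G : {set 'I_n}, G \subset C -> #|G| = 4 ->
    initial_or_final (stick G) (T :&: [set x in stick G]).

Definition sm (V : finType) (f : V -> {set triple}) : {set triple} :=
  [set t : triple | (#|V| < 2 * #|[set v | t \in f v]|)%N].

Definition condorcet_super_domain (C : {set 'I_n}) (D : {set {set triple}}) : Prop :=
  forall (V : finType) (f : V -> {set triple}),
    odd #|V| -> (forall v, f v \in D) -> tiling C (sm f).

Definition restrict (D : {set {set triple}}) (F : {set 'I_n}) : {set {set triple}} :=
  [set T :&: Lambda3 F | T in D].

End Tilings.

From mathcomp Require Import all_boot.
Set Implicit Arguments. Unset Strict Implicit. Unset Printing Implicit Defensive.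

(* Being a tiling is a local condition: T is a tiling for C iff it lies in
   Lambda^3(C) and its restriction to every 4-subset G of C is a tiling for G,
   because the stick of G lies in Lambda^3(G).  Simple majority commutes with
   intersecting every voter by a fixed set, so the majority of the restrictions
   to Lambda^3(F) is the restriction of the majority.  Hence restricting a
   super-domain gives a super-domain, and conversely a majority of tilings is
   a tiling as soon as its restriction to each 4-subset is one. *)

Section Restriction.
Variable n : nat.
Implicit Types (C F G : {set 'I_n}) (T L : {set triple n}) (D : {set {set triple n}}).

Lemma stick_sub_Lambda3 G : #|G| = 4 -> [set x in stick G] \subset Lambda3 G.
Proof.
move=> G4; apply/subsetP => x; rewrite inE => /mapP [y].
rewrite mem_rev mem_sort mem_enum => yG ->.
rewrite inE subsetDl /=.
by have := cardsD1 y G; rewrite yG G4 => -[->].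
Qed.

Lemma Lambda3S F C : F \subset C -> Lambda3 F \subset Lambda3 C.
Proof.
move=> FC; apply/subsetP => t; rewrite !inE => /andP [tF ->].
by rewrite (subset_trans tF FC).
Qed.

Lemma setI_Lambda3_stick T F G : G \subset F -> #|G| = 4 ->
  T :&: Lambda3 F :&: [set x in stick G] = T :&: [set x in stick G].
Proof.
move=> GF G4; rewrite -setIA; congr (_ :&: _); apply/setIidPr.
exact: subset_trans (stick_sub_Lambda3 G4) (Lambda3S GF).
Qed.

Lemma tiling_setI_Lambda3 C F T :
  F \subset C -> tiling C T -> tiling F (T :&: Lambda3 F).
Proof.
move=> FC [_ tilT]; split=> [|G GF G4]; first exact: subsetIr.
rewrite setI_Lambda3_stick //; exact: tilT (subset_trans GF FC) G4.
Qed.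

Lemma tiling_localP C T :
  tiling C T <->
  T \subset Lambda3 C /\
  forall G, G \subset C -> #|G| = 4 -> tiling G (T :&: Lambda3 G).
Proof.
split=> [tilT | [TC tilTG]].
  by split=> [|G GC _]; [case: tilT | exact: tiling_setI_Lambda3 GC tilT].
split=> // G GC G4; have [_ /(_ G (subxx G) G4)] := tilTG G GC G4.
by rewrite setI_Lambda3_stick.
Qed.

Section Majority.
Variable V : finType.
Implicit Types f g : V -> {set triple n}.

Lemma eq_sm f g : f =1 g -> sm f = sm g.
Proof.
move=> fg; apply/setP => t; rewrite !inE.
by under eq_finset => v do rewrite fg.
Qed.

Lemma sm_setIr f L : sm (fun v => f v :&: L) = sm f :&: L.
Proof.
apply/setP => t; rewrite !inE; have [tL | tL] := boolP (t \in L).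
  by rewrite andbT; under eq_finset => v do rewrite inE tL andbT.
under eq_finset => v do rewrite inE (negbTE tL) andbF.
by rewrite andbF -/(set0 : {set V}) cards0.
Qed.

Lemma sm_sub f L : (forall v, f v \subset L) -> sm f \subset L.
Proof.
move=> fL; apply/subsetP => t; rewrite inE => maj_t.
have /set0Pn [v] : [set v | t \in f v] != set0.
  by apply: contraTneq maj_t => ->; rewrite cards0.
by rewrite inE; apply/subsetP.
Qed.

Lemma restrict_lift D F f : (forall v, f v \in restrict D F) ->
  exists2 g, forall v, g v \in D & f =1 (fun v => g v :&: Lambda3 F).
Proof.
move=> fDF; apply: (@fin_all_exists2 V (fun _ => {set triple n})
  (fun _ T => T \in D) (fun v T => f v = T :&: Lambda3 F)) => v.
by have /imsetP [T] := fDF v; exists T.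
Qed.

End Majority.

Lemma condorcet_super_domain_restrict C F D : F \subset C ->
  condorcet_super_domain C D -> condorcet_super_domain F (restrict D F).
Proof.
move=> FC csdD V f oddV fDF; have [g gD fg] := restrict_lift fDF.
rewrite (eq_sm fg) sm_setIr; exact: tiling_setI_Lambda3 FC (csdD V g oddV gD).
Qed.

Lemma condorcet_super_domain_local C D :
  (forall T, T \in D -> T \subset Lambda3 C) ->
  (forall G, G \subset C -> #|G| = 4 -> condorcet_super_domain G (restrict D G)) ->
  condorcet_super_domain C D.
Proof.
move=> DC csdDG V f oddV fD; apply/tiling_localP; split=> [|G GC G4].
  by apply: sm_sub => v; apply: DC.
rewrite -sm_setIr; apply: (csdDG G GC G4 V _ oddV) => v.
exact: imset_f (fD v).
Qed.

End Restriction.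

Theorem proposition1 (n : nat) (hn : (4 <= n)%N) (D : {set {set {set 'I_n}}})
  (hD : forall T, T \in D -> tiling [set: 'I_n] T) :
  condorcet_super_domain [set: 'I_n] D <->
  (forall F : {set 'I_n}, #|F| = 4 -> condorcet_super_domain F (restrict D F)).
Proof.
split=> [csdD F _ | csdDF].
  exact: condorcet_super_domain_restrict (subsetT F) csdD.
apply: condorcet_super_domain_local => [T /hD [] // | G _]; exact: csdDF.
Qed.
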